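(* Let $S$ be a semigroup and $p$ a strongly productive ultrafilter on $S$. If $p$ is multiplicatively isomorphic to an ordered union ultrafilter, then $p$ is sparse. In particular every ordered union ultrafilter is sparse.
   Context: For a sequence $\vec{x}=(x_n)_{n\in\omega}$ in $S$, $\mathrm{FP}(\vec{x})$ is the set of products $\prod_{i\in a}x_i$ (increasing order of indices), $a$ finite nonempty subset of $\omega$; $p$ is strongly productive if every $A\in p$ contains some $\mathrm{FP}(\vec{x})\in p$. $\mathbb{F}$ is the partial semigroup of finite nonempty subsets of $\omega$ where $ab$ is defined, and equals $a\cup b$, iff $\max a<\min b$; an ordered union ultrafilter is a strongly productive ultrafilter on $\mathbb{F}$ (every member contains $\mathrm{FP}(\vec{b})$, belonging to the ultrafilter, for some sequence $\vec{b}$ in $\mathbb{F}$ with $\max b_i<\min b_{i+1}$). $p$ is multiplicatively isomorphic to an ordered union ultrafilter if there is a sequence $\vec{x}$ in $S$ such that $f:\mathbb{F}\to\mathrm{FP}(\vec{x})$, $f(a)=\prod_{i\in a}x_i$, is injective and $\{f^{-1}[A]:A\in p\}$ is an ordered union ultrafilter. A strongly productive ultrafilter $p$ is sparse if for every $A\in p$ there are a sequence $\vec{x}=(x_n)_{n\in\omega}$ in $S$ and a subsequence $\vec{y}=(x_{k_n})_{n\in\omega}$ ($k_0<k_1<\cdots$) such that $\mathrm{FP}(\vec{y})\in p$, $\mathrm{FP}(\vec{x})\subseteq A$, and $\{k_n:n\in\omega\}$ is coinfinite in $\omega$. *)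

From Stdlib Require Import List Arith.
Import ListNotations.

(* A finite nonempty subset of omega, encoded as its strictly increasing
   (nonempty) enumeration. *)
Fixpoint incr (l : list nat) : bool :=
  match l with
  | [] => true
  | a :: t => match t with
              | [] => true
              | b :: _ => Nat.ltb a b && incr t
              end
  end.

Definition isFin (l : list nat) : bool :=
  match l with [] => false | _ => incr l end.

Definition FinNE : Type := { l : list nat | isFin l = true }.

Definition fmin (a : FinNE) : nat := hd 0 (proj1_sig a).
Definition fmax (a : FinNE) : nat := last (proj1_sig a) 0.

Definition ultrafilter {X : Type} (p : (X -> Prop) -> Prop) : Prop :=
  p (fun _ => True) /\
  ~ p (fun _ => False) /\
  (forall A B : X -> Prop, p A -> (forall x, A x -> B x) -> p B) /\
  (forall A B : X -> Prop, p A -> p B -> p (fun x => A x /\ B x)) /\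
  (forall A : X -> Prop, p A \/ p (fun x => ~ A x)).

Definition subset {X : Type} (A B : X -> Prop) : Prop := forall x, A x -> B x.

Section Semi.
Context {S : Type} (op : S -> S -> S).

Definition prodList (x : nat -> S) (l : list nat) : S :=
  match l with
  | [] => x 0 (* never used: elements of FinNE are nonempty *)
  | i0 :: t => fold_left (fun acc j => op acc (x j)) t (x i0)
  end.

Definition prodF (x : nat -> S) (a : FinNE) : S := prodList x (proj1_sig a).

Definition FP (x : nat -> S) : S -> Prop := fun s => exists a : FinNE, s = prodF x a.

Definition strongly_productive (p : (S -> Prop) -> Prop) : Prop :=
  ultrafilter p /\
  forall A, p A -> exists x : nat -> S, p (FP x) /\ subset (FP x) A.

Definition sparse (p : (S -> Prop) -> Prop) : Prop :=
  forall A, p A ->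
    exists (x : nat -> S) (k : nat -> nat),
      (forall n, k n < k (Datatypes.S n)) /\
      p (FP (fun n => x (k n))) /\
      subset (FP x) A /\
      (forall N, exists m, N <= m /\ forall n, k n <> m).
End Semi.

Definition block_seq (b : nat -> FinNE) : Prop :=
  forall i, fmax (b i) < fmin (b (Datatypes.S i)).

(* FP(b) in F: the unions  U_{i in a} b_i  (for a block sequence this union,
   in increasing order, is the concatenation of the b_i, i in a increasing). *)
Definition FU (b : nat -> FinNE) : FinNE -> Prop :=
  fun c => exists a : FinNE,
    proj1_sig c = concat (map (fun i => proj1_sig (b i)) (proj1_sig a)).

Definition ordered_union (q : (FinNE -> Prop) -> Prop) : Prop :=
  ultrafilter q /\
  forall A, q A -> exists b : nat -> FinNE, block_seq b /\ q (FU b) /\ subset (FU b) A.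

Definition sparseF (q : (FinNE -> Prop) -> Prop) : Prop :=
  forall A, q A ->
    exists (b : nat -> FinNE) (k : nat -> nat),
      block_seq b /\
      (forall n, k n < k (Datatypes.S n)) /\
      q (FU (fun n => b (k n))) /\
      subset (FU b) A /\
      (forall N, exists m, N <= m /\ forall n, k n <> m).

Definition mult_iso_OU {S : Type} (op : S -> S -> S) (p : (S -> Prop) -> Prop) : Prop :=
  exists x : nat -> S,
    (forall a b : FinNE, prodF op x a = prodF op x b -> a = b) /\
    ordered_union (fun B : FinNE -> Prop =>
      exists A : S -> Prop, p A /\ forall c, B c <-> A (prodF op x c)).

(* Let b be a block sequence with
   FU(b) in q, FU(b) contained in A.  Colour each union b_a (a a finite index
   set) by the parity of the number of "breaks" of a, i.e. of gaps between
   consecutive elements of a.  Since unions along a chain determine their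
   index set, this colouring is well defined; one colour class is in q and
   contains FU(d) in q for a block sequence d, d_n = b_(J n).  The index sets
   J n form a chain, and the colour of d_n u d_m (n < m) forces the parity of
   the gap between J n and J m; comparing with the gap between J 0 and J 2,
   which is certainly a break, every gap between J n and J (n+1) is a break.
   So some b_i lies strictly between d_n and d_(n+1); interleaving these
   b_i with the d_n yields the block sequence x required by sparseness, with
   d = x restricted to the even positions.

   The semigroup case is transported along x : F -> S, since products along a
   concatenation of blocks are products of the blocks' products. *)

From Stdlib Require Import List Arith Lia Bool IndefiniteDescription.
Import ListNotations.

Lemma isFin_ne (l : list nat) : isFin l = true -> l <> [].
Proof. destruct l; simpl; congruence. Qed.

Lemma isFin_incr (l : list nat) : isFin l = true -> incr l = true.
Proof. destruct l; simpl; auto; discriminate. Qed.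

Lemma incr_isFin (l : list nat) : l <> [] -> incr l = true -> isFin l = true.
Proof. destruct l; simpl; auto; congruence. Qed.

Lemma incr_cons2 (a c : nat) (t : list nat) :
  incr (a :: c :: t) = (a <? c) && incr (c :: t).
Proof. reflexivity. Qed.

Lemma last_cons_ne (a : nat) (l : list nat) (d : nat) :
  l <> [] -> last (a :: l) d = last l d.
Proof. destruct l; [congruence | reflexivity]. Qed.

Lemma last_app_ne (l1 l2 : list nat) (d : nat) :
  l2 <> [] -> last (l1 ++ l2) d = last l2 d.
Proof.
  intros Hl2; induction l1 as [|a t IH]; auto.
  change ((a :: t) ++ l2) with (a :: (t ++ l2)).
  rewrite last_cons_ne; auto.
  destruct t; simpl; auto; discriminate.
Qed.

Lemma incr_hd_le_last (l : list nat) : incr l = true -> hd 0 l <= last l 0.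
Proof.
  induction l as [|a [|c t] IH]; simpl; auto.
  intros H; apply andb_prop in H as [Hac Ht]; apply Nat.ltb_lt in Hac.
  specialize (IH Ht); simpl in IH; lia.
Qed.

Lemma incr_app (l1 l2 : list nat) :
  incr l1 = true -> incr l2 = true -> l1 <> [] -> l2 <> [] ->
  last l1 0 < hd 0 l2 -> incr (l1 ++ l2) = true.
Proof.
  induction l1 as [|a [|c t] IH]; intros H1 H2 Hne1 Hne2 Hlt; [congruence| |].
  - destruct l2 as [|d l2]; [congruence|].
    change ([a] ++ d :: l2) with (a :: d :: l2).
    rewrite incr_cons2, H2, andb_true_r; apply Nat.ltb_lt; exact Hlt.
  - rewrite incr_cons2 in H1; apply andb_prop in H1 as [Hac Ht].
    change ((a :: c :: t) ++ l2) with (a :: c :: (t ++ l2)).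
    rewrite incr_cons2, Hac; apply IH; auto; discriminate.
Qed.

Definition chain (L : nat -> list nat) : Prop :=
  forall i, L i <> [] /\ incr (L i) = true /\ last (L i) 0 < hd 0 (L (S i)).

Section Chain.
Variable L : nat -> list nat.
Hypothesis HL : chain L.

Lemma chain_ne (i : nat) : L i <> [].
Proof. apply HL. Qed.

Lemma chain_hd_le_last (i : nat) : hd 0 (L i) <= last (L i) 0.
Proof. apply incr_hd_le_last, HL. Qed.

Lemma chain_lt (i j : nat) : i < j -> last (L i) 0 < hd 0 (L j).
Proof.
  induction j as [|j IH]; intros Hij; [lia|].
  destruct (HL j) as [_ [_ Hj]].
  destruct (Nat.eq_dec i j) as [->|Hne]; auto.
  pose proof (chain_hd_le_last j); specialize (IH ltac:(lia)); lia.
Qed.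

Lemma chain_lt_index (i j : nat) : last (L i) 0 < hd 0 (L j) -> i < j.
Proof.
  intros Hlt; destruct (Nat.lt_ge_cases i j) as [|Hji]; auto; exfalso.
  pose proof (chain_hd_le_last i); pose proof (chain_hd_le_last j).
  destruct (Nat.eq_dec i j) as [->|Hne]; [lia|].
  pose proof (chain_lt j i ltac:(lia)); lia.
Qed.

Lemma hd_concat (a : list nat) :
  a <> [] -> hd 0 (concat (map L a)) = hd 0 (L (hd 0 a)).
Proof.
  destruct a as [|n a]; [congruence|]; intros _; simpl.
  pose proof (chain_ne n); destruct (L n); [congruence | reflexivity].
Qed.

Lemma concat_ne (a : list nat) : a <> [] -> concat (map L a) <> [].
Proof.
  destruct a as [|n a]; [congruence|]; intros _; simpl.
  pose proof (chain_ne n); destruct (L n); [congruence | discriminate].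
Qed.

Lemma last_concat (a : list nat) :
  a <> [] -> last (concat (map L a)) 0 = last (L (last a 0)) 0.
Proof.
  induction a as [|i [|i' t] IH]; intros Ha; [congruence| |].
  - simpl; rewrite app_nil_r; reflexivity.
  - change (concat (map L (i :: i' :: t))) with (L i ++ concat (map L (i' :: t))).
    rewrite last_app_ne by (apply concat_ne; discriminate).
    rewrite IH by discriminate; reflexivity.
Qed.

Lemma chain_hd_inj (i j : nat) : hd 0 (L i) = hd 0 (L j) -> i = j.
Proof.
  intros Heq; destruct (Nat.lt_total i j) as [Hlt|[Hij|Hlt]]; auto; exfalso.
  - pose proof (chain_lt i j Hlt); pose proof (chain_hd_le_last i); lia.
  - pose proof (chain_lt j i Hlt); pose proof (chain_hd_le_last j); lia.
Qed.

Lemma concat_map_inj (a1 a2 : list nat) :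
  concat (map L a1) = concat (map L a2) -> a1 = a2.
Proof.
  revert a2; induction a1 as [|i t IH]; intros [|j t2] H; simpl in H; auto.
  - exfalso; pose proof (chain_ne j); destruct (L j); [congruence | discriminate].
  - exfalso; pose proof (chain_ne i); destruct (L i); [congruence | discriminate].
  - assert (Hij : i = j).
    { apply chain_hd_inj; pose proof (chain_ne i); pose proof (chain_ne j).
      destruct (L i), (L j); try congruence; simpl in H |- *.
      injection H; intros; assumption. }
    subst j; f_equal; apply IH; apply app_inv_head in H; exact H.
Qed.

Lemma concat_incr (i : nat) (s : list nat) :
  incr (i :: s) = true -> incr (concat (map L (i :: s))) = true.
Proof.
  revert i; induction s as [|i' s IH]; intros i Hs.
  - simpl; rewrite app_nil_r; apply HL.
  - change (concat (map L (i :: i' :: s))) with (L i ++ concat (map L (i' :: s))).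
    rewrite incr_cons2 in Hs; apply andb_prop in Hs as [Hii Hs]; apply Nat.ltb_lt in Hii.
    apply incr_app; [apply HL | apply IH, Hs | apply chain_ne
                    | apply concat_ne; discriminate |].
    rewrite hd_concat by discriminate; apply chain_lt; exact Hii.
Qed.

Lemma concat_isFin (s : list nat) : isFin s = true -> isFin (concat (map L s)) = true.
Proof.
  destruct s as [|i s]; [discriminate|]; intros Hs.
  apply incr_isFin; [apply concat_ne; discriminate | apply concat_incr, Hs].
Qed.

End Chain.

Lemma block_chain (b : nat -> FinNE) : block_seq b -> chain (fun i => proj1_sig (b i)).
Proof.
  intros Hb i; split; [apply isFin_ne, proj2_sig | split; [apply isFin_incr, proj2_sig |]].
  apply (Hb i).
Qed.

Definition unionFin (b : nat -> FinNE) (Hb : block_seq b) (a : FinNE) : FinNE :=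
  exist (fun l => isFin l = true) (concat (map (fun i => proj1_sig (b i)) (proj1_sig a)))
    (concat_isFin _ (block_chain b Hb) _ (proj2_sig a)).

Lemma unionFin_FU (b : nat -> FinNE) (Hb : block_seq b) (a : FinNE) : FU b (unionFin b Hb a).
Proof. exists a; reflexivity. Qed.

Lemma concat_concat (L I : nat -> list nat) (s : list nat) :
  concat (map (fun i => concat (map L (I i))) s) = concat (map L (concat (map I s))).
Proof.
  induction s as [|i s IH]; simpl; auto.
  rewrite map_app, concat_app, IH; reflexivity.
Qed.

Lemma FU_refine (b x : nat -> FinNE) (I : nat -> list nat) :
  chain I -> (forall m, proj1_sig (x m) = concat (map (fun i => proj1_sig (b i)) (I m))) ->
  subset (FU x) (FU b).
Proof.
  intros HI Hx c [a Ha].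
  exists (exist (fun l => isFin l = true) _ (concat_isFin I HI _ (proj2_sig a))); simpl.
  rewrite Ha, <- concat_concat; f_equal; apply map_ext; auto.
Qed.

Lemma block_refine (b x : nat -> FinNE) (I : nat -> list nat) :
  block_seq b -> chain I ->
  (forall m, proj1_sig (x m) = concat (map (fun i => proj1_sig (b i)) (I m))) ->
  block_seq x.
Proof.
  intros Hb HI Hx m; pose proof (block_chain b Hb) as HL.
  unfold fmax, fmin; rewrite !Hx, last_concat, hd_concat by (auto; apply HI).
  apply (chain_lt _ HL), HI.
Qed.

Lemma FU_ext (b b' : nat -> FinNE) : (forall n, b n = b' n) -> subset (FU b) (FU b').
Proof.
  intros Hbb c [a Ha]; exists a; rewrite Ha; f_equal; apply map_ext; intros n.
  rewrite Hbb; reflexivity.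
Qed.

(** * Generalized associativity *)

Section Products.
Variables (T : Type) (op : T -> T -> T).
Hypothesis assoc : forall a b c, op a (op b c) = op (op a b) c.

Lemma fold_op (x : nat -> T) (t : list nat) (y z : T) :
  fold_left (fun acc j => op acc (x j)) t (op y z)
  = op y (fold_left (fun acc j => op acc (x j)) t z).
Proof. revert z; induction t as [|j t IH]; intros z; simpl; auto; rewrite <- assoc; apply IH. Qed.

Lemma prodList_app (x : nat -> T) (l1 l2 : list nat) : l1 <> [] -> l2 <> [] ->
  prodList op x (l1 ++ l2) = op (prodList op x l1) (prodList op x l2).
Proof.
  destruct l1 as [|i t]; [congruence|]; destruct l2 as [|j t2]; [congruence|]; intros _ _.
  simpl; rewrite fold_left_app; simpl; rewrite fold_op; reflexivity.
Qed.

Lemma prodList_concat (x : nat -> T) (L : nat -> list nat) (s : list nat) :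
  (forall i, L i <> []) -> s <> [] ->
  prodList op x (concat (map L s)) = prodList op (fun i => prodList op x (L i)) s.
Proof.
  intros HL; induction s as [|i [|i' t] IH]; intros Hs; [congruence| |].
  - simpl; rewrite app_nil_r; reflexivity.
  - change (concat (map L (i :: i' :: t))) with (L i ++ concat (map L (i' :: t))).
    assert (Hne : concat (map L (i' :: t)) <> []).
    { simpl; pose proof (HL i'); destruct (L i'); [congruence | discriminate]. }
    rewrite prodList_app, IH by (auto; discriminate).
    change (i :: i' :: t) with ([i] ++ (i' :: t)).
    rewrite (prodList_app _ [i]) by discriminate; reflexivity.
Qed.

End Products.

(** * Counting breaks *)

Fixpoint breaks (l : list nat) : nat :=
  match l with
  | a :: ((c :: _) as t) => (if Nat.eqb (S a) c then 0 else 1) + breaks t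
  | _ => 0
  end.

Definition gap (l1 l2 : list nat) : nat :=
  if Nat.eqb (S (last l1 0)) (hd 0 l2) then 0 else 1.

Lemma breaks_app (l1 l2 : list nat) : l1 <> [] -> l2 <> [] ->
  breaks (l1 ++ l2) = breaks l1 + breaks l2 + gap l1 l2.
Proof.
  induction l1 as [|a [|c t] IH]; intros H1 H2; [congruence| |].
  - destruct l2 as [|c l2]; [congruence|]; unfold gap; simpl; lia.
  - change ((a :: c :: t) ++ l2) with (a :: (c :: t) ++ l2).
    change (breaks (a :: (c :: t) ++ l2))
      with ((if Nat.eqb (S a) c then 0 else 1) + breaks ((c :: t) ++ l2)).
    change (breaks (a :: c :: t)) with ((if Nat.eqb (S a) c then 0 else 1) + breaks (c :: t)).
    rewrite IH by (auto; discriminate); unfold gap; simpl last; lia.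
Qed.

(* If all members of a chain, and all unions of two of them, have the same
   parity of breaks, then this parity is odd and consecutive members are
   separated by a hole: the gap from J 0 to J 2 is a break, so every gap is. *)
Lemma parity_forces_holes (J : nat -> list nat) (e : bool) : chain J ->
  (forall n, Nat.odd (breaks (J n)) = e) ->
  (forall n m, n < m -> Nat.odd (breaks (J n ++ J m)) = e) ->
  forall n, S (last (J n) 0) < hd 0 (J (S n)).
Proof.
  intros HJ Hone Htwo.
  assert (Hgap : forall n m, n < m -> Nat.odd (gap (J n) (J m)) = e).
  { intros n m Hnm; specialize (Htwo n m Hnm).
    rewrite breaks_app, !Nat.odd_add, !Hone in Htwo by apply chain_ne, HJ.
    destruct e, (Nat.odd (gap (J n) (J m))); simpl in *; congruence. }
  assert (He : e = true).
  { rewrite <- (Hgap 0 2 ltac:(lia)); unfold gap.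
    pose proof (chain_lt J HJ 0 1 ltac:(lia)); pose proof (chain_lt J HJ 1 2 ltac:(lia)).
    pose proof (chain_hd_le_last J HJ 1).
    destruct (Nat.eqb_spec (S (last (J 0) 0)) (hd 0 (J 2))); [lia | reflexivity]. }
  subst e; intros n; specialize (Hgap n (S n) ltac:(lia)).
  pose proof (chain_lt J HJ n (S n) ltac:(lia)); unfold gap in Hgap.
  destruct (Nat.eqb_spec (S (last (J n) 0)) (hd 0 (J (S n)))); [discriminate | lia].
Qed.

Definition interleave {X : Type} (u v : nat -> X) (m : nat) : X :=
  if Nat.even m then u (Nat.div2 m) else v (Nat.div2 m).

Lemma interleave_even {X : Type} (u v : nat -> X) (n : nat) : interleave u v (2 * n) = u n.
Proof. unfold interleave; rewrite Nat.even_even, Nat.div2_double; reflexivity. Qed.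

Lemma interleave_odd {X : Type} (u v : nat -> X) (n : nat) : interleave u v (2 * n + 1) = v n.
Proof. unfold interleave; rewrite Nat.even_odd, Nat.div2_odd'; reflexivity. Qed.

Lemma interleave_holes_chain (J : nat -> list nat) : chain J ->
  (forall n, S (last (J n) 0) < hd 0 (J (S n))) ->
  chain (interleave J (fun n => [S (last (J n) 0)])).
Proof.
  intros HJ Hholes m; destruct (Nat.Even_or_Odd m) as [[n ->]|[n ->]].
  - replace (S (2 * n)) with (2 * n + 1) by lia.
    rewrite interleave_even, interleave_odd; simpl.
    split; [apply HJ | split; [apply HJ | lia]].
  - replace (S (2 * n + 1)) with (2 * S n) by lia.
    rewrite interleave_odd, interleave_even; simpl.
    split; [discriminate | split; [reflexivity | apply Hholes]].
Qed.

Definition FU_parity (b : nat -> FinNE) (e : bool) (c : FinNE) : Prop :=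
  exists a : FinNE,
    proj1_sig c = concat (map (fun i => proj1_sig (b i)) (proj1_sig a)) /\
    Nat.odd (breaks (proj1_sig a)) = e.

Lemma FU_parity_class (q : (FinNE -> Prop) -> Prop) (b : nat -> FinNE) :
  ultrafilter q -> q (FU b) -> exists e, q (FU_parity b e).
Proof.
  intros [_ [_ [qmono [qint qult]]]] HFU.
  destruct (qult (FU_parity b false)) as [Hfalse|Hnot]; [exists false; exact Hfalse|].
  exists true; apply (qmono _ _ (qint _ _ HFU Hnot)).
  intros c [[a Ha] Hn]; exists a; split; auto.
  destruct (Nat.odd (breaks (proj1_sig a))) eqn:Hodd; auto.
  exfalso; apply Hn; exists a; auto.
Qed.

Lemma choose_indices (b d : nat -> FinNE) (e : bool) :
  subset (FU d) (FU_parity b e) ->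
  exists J : nat -> list nat, forall n,
    (isFin (J n) = true /\
     proj1_sig (d n) = concat (map (fun i => proj1_sig (b i)) (J n))) /\
    Nat.odd (breaks (J n)) = e.
Proof.
  intros Hsub.
  assert (Hrep : forall n, exists a : FinNE,
    proj1_sig (d n) = concat (map (fun i => proj1_sig (b i)) (proj1_sig a)) /\
    Nat.odd (breaks (proj1_sig a)) = e).
  { intros n; apply Hsub; exists (exist (fun l => isFin l = true) [n] eq_refl).
    simpl; rewrite app_nil_r; reflexivity. }
  destruct (functional_choice _ Hrep) as [a Ha].
  exists (fun n => proj1_sig (a n)); intros n.
  destruct (Ha n) as [Hrepn Hparn]; repeat split; auto; apply proj2_sig.
Qed.

Section Refinement.
Variables (b d : nat -> FinNE) (J : nat -> list nat).
Hypotheses (Hb : block_seq b) (Hd : block_seq d).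
Hypothesis HJ : forall n,
  isFin (J n) = true /\ proj1_sig (d n) = concat (map (fun i => proj1_sig (b i)) (J n)).

Let Lb : nat -> list nat := fun i => proj1_sig (b i).

Lemma indices_chain : chain J.
Proof.
  intros n; pose proof (HJ n) as [HJn _]; pose proof (HJ (S n)) as [HJSn _].
  split; [apply isFin_ne, HJn | split; [apply isFin_incr, HJn |]].
  apply (chain_lt_index Lb (block_chain b Hb)).
  pose proof (Hd n) as Hdn; unfold fmax, fmin in Hdn.
  rewrite (proj2 (HJ n)), (proj2 (HJ (S n))), last_concat, hd_concat in Hdn
    by (apply isFin_ne || apply block_chain; auto).
  exact Hdn.
Qed.

(* d_n u d_m is the union over J n ++ J m, so it carries that parity. *)
Lemma indices_pair_parity (e : bool) : subset (FU d) (FU_parity b e) ->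
  forall n m, n < m -> Nat.odd (breaks (J n ++ J m)) = e.
Proof.
  intros Hsub n m Hnm.
  assert (Hnm_fin : isFin [n; m] = true)
    by (simpl; rewrite andb_true_r; apply Nat.ltb_lt, Hnm).
  destruct (Hsub _ (unionFin_FU d Hd (exist _ _ Hnm_fin))) as [a [Ha Hpar]].
  simpl in Ha; rewrite app_nil_r, (proj2 (HJ n)), (proj2 (HJ m)), <- concat_app,
    <- map_app in Ha.
  apply (concat_map_inj Lb (block_chain b Hb)) in Ha; rewrite Ha; exact Hpar.
Qed.

(* If consecutive index sets are separated by holes, inserting the block
   b_i of the first hole after each d_n gives a block sequence whose
   unions are unions of b. *)
Definition fill_holes : nat -> FinNE := interleave d (fun n => b (S (last (J n) 0))).

Lemma fill_holes_refines (holes : forall n, S (last (J n) 0) < hd 0 (J (S n))) :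
  block_seq fill_holes /\ subset (FU fill_holes) (FU b).
Proof.
  set (I := interleave J (fun n => [S (last (J n) 0)])).
  assert (HI : chain I) by (apply interleave_holes_chain; [apply indices_chain | exact holes]).
  assert (Hrel : forall m, proj1_sig (fill_holes m) = concat (map Lb (I m))).
  { intros m; unfold fill_holes, I; destruct (Nat.Even_or_Odd m) as [[n ->]|[n ->]].
    - rewrite !interleave_even; apply HJ.
    - rewrite !interleave_odd; simpl; rewrite app_nil_r; reflexivity. }
  split; [apply (block_refine b _ I) | apply (FU_refine b _ I)]; auto.
Qed.

End Refinement.

Theorem ordered_union_sparse (q : (FinNE -> Prop) -> Prop) : ordered_union q -> sparseF q.
Proof.
  intros [Uq OU] A HA.
  destruct (OU A HA) as [b [Hb [HFUb HbA]]].
  destruct (FU_parity_class q b Uq HFUb) as [e He].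
  destruct (OU _ He) as [d [Hd [HFUd HdD]]].
  destruct (choose_indices b d e HdD) as [J HJ].
  pose (HJrep := fun n => proj1 (HJ n)).
  assert (holes : forall n, S (last (J n) 0) < hd 0 (J (S n))).
  { apply (parity_forces_holes J e (indices_chain b d J Hb Hd HJrep)); [intros n; apply HJ|].
    apply (indices_pair_parity b d J Hb Hd HJrep e HdD). }
  destruct (fill_holes_refines b d J Hb Hd HJrep holes) as [Hx HxFU].
  exists (fill_holes b d J), (fun n => 2 * n); repeat split.
  - exact Hx.
  - intros n; lia.
  - destruct Uq as [_ [_ [qmono _]]]; apply (qmono _ _ HFUd), FU_ext.
    intros n; unfold fill_holes; rewrite interleave_even; reflexivity.
  - intros c Hc; apply HbA, HxFU, Hc.
  - intros N; exists (2 * N + 1); split; [lia | intros n; lia].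
Qed.

(** * Transfer to semigroups *)

Section Transfer.
Variables (T : Type) (op : T -> T -> T).
Hypothesis assoc : forall a b c, op a (op b c) = op (op a b) c.
Variable x : nat -> T.

Lemma prodF_union (b : nat -> FinNE) (a c : FinNE) :
  proj1_sig c = concat (map (fun i => proj1_sig (b i)) (proj1_sig a)) ->
  prodF op x c = prodF op (fun n => prodF op x (b n)) a.
Proof.
  intros Hc; unfold prodF at 1; rewrite Hc.
  apply prodList_concat; [exact assoc | intros i; apply isFin_ne, proj2_sig |].
  apply isFin_ne, proj2_sig.
Qed.

Lemma FU_image_FP (b : nat -> FinNE) (c : FinNE) :
  FU b c -> FP op (fun n => prodF op x (b n)) (prodF op x c).
Proof. intros [a Ha]; exists a; apply prodF_union, Ha. Qed.

Lemma FP_blocks_image (b : nat -> FinNE) (Hb : block_seq b) (s : T) :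
  FP op (fun n => prodF op x (b n)) s -> exists c, FU b c /\ s = prodF op x c.
Proof.
  intros [a ->]; exists (unionFin b Hb a); split; [apply unionFin_FU |].
  symmetry; apply prodF_union; reflexivity.
Qed.

End Transfer.

Definition pullback {T : Type} (f : FinNE -> T) (p : (T -> Prop) -> Prop)
  (B : FinNE -> Prop) : Prop :=
  exists A : T -> Prop, p A /\ forall c, B c <-> A (f c).

Lemma range_in_ultrafilter {T : Type} (f : FinNE -> T) (p : (T -> Prop) -> Prop) :
  ultrafilter p -> ~ pullback f p (fun _ => False) -> p (fun s => exists c, s = f c).
Proof.
  intros [_ [_ [_ [_ pult]]]] Hproper.
  destruct (pult (fun s => exists c, s = f c)) as [Hin|Hout]; auto; exfalso.
  apply Hproper; exists (fun s => ~ exists c, s = f c); split; auto.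
  intros c; split; [tauto | intros Hn; apply Hn; exists c; reflexivity].
Qed.

Theorem iso_ordered_union_sparse (T : Type) (op : T -> T -> T)
  (assoc : forall a b c, op a (op b c) = op (op a b) c) (p : (T -> Prop) -> Prop) :
  strongly_productive op p -> mult_iso_OU op p -> sparse op p.
Proof.
  intros [Up _] [x [_ HOU]] A HA.
  pose proof Up as [_ [_ [pmono [pint _]]]].
  destruct (ordered_union_sparse _ HOU (fun c => A (prodF op x c)))
    as [b [k [Hb [Hk [[A' [HA' HA'iff]] [HbA Hcof]]]]]].
  { exists A; split; [exact HA | tauto]. }
  assert (Hrange : p (FP op x)).
  { apply (range_in_ultrafilter (prodF op x) p Up); exact (proj1 (proj2 (proj1 HOU))). }
  exists (fun n => prodF op x (b n)), k; repeat split; auto.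
  - apply (pmono _ _ (pint _ _ HA' Hrange)); intros s [HA's [c ->]].
    apply FU_image_FP; [exact assoc |]; apply HA'iff, HA's.
  - intros s Hs; destruct (FP_blocks_image T op assoc x b Hb s Hs) as [c [Hc ->]].
    apply HbA, Hc.
Qed.

Theorem mainTheorem15 :
  (forall (S : Type) (op : S -> S -> S)
     (assoc : forall a b c, op a (op b c) = op (op a b) c)
     (p : (S -> Prop) -> Prop),
     strongly_productive op p -> mult_iso_OU op p -> sparse op p)
  /\
  (forall q : (FinNE -> Prop) -> Prop, ordered_union q -> sparseF q).
Proof.
  split; [exact iso_ordered_union_sparse | exact ordered_union_sparse].
Qed.
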